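(* In the setting described in the context, assume $q$ is a square and let $v\ge1$ be an integer such that $d=v(q+\sqrt q+1)$ divides $q^2+q+1$, and let $t=(q^2+q+1)/d$. Then $t=\frac{q-\sqrt q+1}{v}$, $w_0=\sqrt q+v$, and $w_1=\dots=w_{t-1}=v$.
   Context: Let $q=p^h$ with $p$ prime, $h\ge1$. Let $\alpha$ be a primitive element of $\mathbb{F}_{q^3}$; the points of $PG(2,q)$ are the 1-dimensional $\mathbb{F}_q$-subspaces of $\mathbb{F}_{q^3}$, and $P_i$ denotes the point represented by $\alpha^i$, so $PG(2,q)=\{P_0,\dots,P_{q^2+q}\}$. Let $\tau:P_i\mapsto P_{ip\bmod(q^2+q+1)}$ (a collineation) and let $\ell_0$ be a line of $PG(2,q)$ fixed by $\tau$. For a positive divisor $t$ of $q^2+q+1$ and $i=0,\dots,t-1$ let $O_i=\{P_u:u\equiv i\pmod t\}$, and for $u=0,\dots,t-1$ let $w_u=|\ell_0\cap O_u|$. *)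

From mathcomp Require Import all_boot all_algebra all_field.
Set Implicit Arguments. Unset Strict Implicit. Unset Printing Implicit Defensive.
Import GRing.Theory.
Local Open Scope ring_scope.

(* F is a field of order q^3; F_q is the subfield {x | x^q = x}. *)
Definition in_Fq (F : finFieldType) (q : nat) (x : F) : bool := x ^+ q == x.

(* L is a 2-dimensional F_q-subspace of F (an F_q-subspace with q^2 elements),
   i.e. a line of PG(2,q) in the model F_{q^3}. *)
Definition is_Fq_plane (F : finFieldType) (q : nat) (L : {set F}) : Prop :=
  [/\ 0 \in L,
      {in L &, forall x y, x + y \in L},
      (forall c x : F, in_Fq q c -> x \in L -> c * x \in L)
    & #|L| = (q ^ 2)%N].

(* The points P_i (0 <= i <= q^2+q) lying on the line with underlying
   subspace L, P_i being represented by a^i. *)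
Definition line_pts (F : finFieldType) (q : nat) (a : F) (L : {set F})
  : {set 'I_(q ^ 2 + q + 1)} :=
  [set i : 'I_(q ^ 2 + q + 1) | a ^+ i \in L].

Definition tau_fixed (p N : nat) (S : {set 'I_N}) : Prop :=
  [set i : 'I_N | [exists j in S, (i : nat) == ((j * p) %% N)%N]] = S.

(* w_u = |S cap O_u| where O_u = {P_i : i = u mod t}. *)
Definition wcount (N t : nat) (S : {set 'I_N}) (u : nat) : nat :=
  #|[set i in S | ((i : nat) %% t == u)%N]|.

From mathcomp Require Import all_boot all_algebra all_field.
From mathcomp Require Import zify ring.
Set Implicit Arguments. Unset Strict Implicit. Unset Printing Implicit Defensive.
Import GRing.Theory.
Local Open Scope ring_scope.

(* Write q = r^2, N = q^2 + q + 1 and m = q - r + 1, so that N = (q + r + 1) m.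
   The points P_i with i = c (mod m) form the Baer subplane represented by
   alpha^c F_{r^3}^*.  A counting argument on F_q- and F_r-subspaces of F_{q^3}
   shows that the line l0 meets every Baer subplane, and meets it in either 1 or
   at least r + 1 points.  Since l0 has q + 1 = m + r points, exactly one
   subplane meets l0 in r + 1 points and all others in one point.  As tau fixes
   l0 and maps the subplane c to the subplane c p mod m, that subplane is fixed,
   and gcd(m, p - 1) = 1 forces it to be c = 0.  Each class mod t is the union of
   v classes mod m, which gives the values of w_u. *)

Lemma card_ord_modn_eq (n t v u : nat) : n = (t * v)%N -> (u < t)%N ->
  #|[set c : 'I_n | (c %% t == u)%N]| = v.
Proof.
move=> nE ut; have t_gt0 : (0 < t)%N by apply: leq_ltn_trans ut.
have lt_n (j : 'I_v) : (u + t * j < n)%N by rewrite nE; have := ltn_ord j; nia.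
pose g (j : 'I_v) := Ordinal (lt_n j).
have g_inj : injective g.
  move=> j j' /(congr1 val) /= /addnI /eqP; rewrite eqn_pmul2l // => /eqP.
  exact: val_inj.
rewrite -[v in RHS]card_ord -cardsT -(card_imset _ g_inj).
apply: eq_card => c; rewrite !inE; apply/idP/imsetP => [/eqP cu|[j _ ->]] /=.
  have cv : (c %/ t < v)%N by rewrite ltn_divLR // mulnC -nE.
  exists (Ordinal cv) => //; apply: val_inj => /=.
  by rewrite {1}(divn_eq c t) cu addnC mulnC.
by rewrite addnC mulnC modnMDl modn_small.
Qed.

Lemma exists_mul_eq_mod (a n d : nat) : (0 < a)%N -> (gcdn a n %| d)%N ->
  exists x, (a * x = d %[mod n])%N.
Proof.
move=> a_gt0 /dvdnP[j ->]; have [u v Euv _] := egcdnP n a_gt0.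
by exists (u * j)%N; rewrite mulnA [(a * u)%N]mulnC Euv mulnDl mulnAC modnMDl mulnC.
Qed.

Lemma leq_add_sum (n : nat) (f : 'I_n -> nat) (i j : 'I_n) : i != j ->
  (f i + f j <= \sum_k f k)%N.
Proof.
by move=> ij; rewrite (bigD1 i) // (bigD1 j) /= ?leq_add2l ?leq_addr // eq_sym.
Qed.

Lemma coprime_sqr_sub_add1 (r d : nat) : (d %| r.-1)%N ->
  coprime (r ^ 2 - r + 1) d.
Proof.
case: r => [|r] /dvdnP[x Ex]; first exact: coprime1n.
have -> : (r.+1 ^ 2 - r.+1 + 1 = (r.+1 * x) * d + 1)%N by move: Ex; nia.
by rewrite /coprime gcdnC gcdnMDl gcdn1.
Qed.

Lemma leq_cardM_cardI (V : finZmodType) (A B : {set V}) :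
  {in A &, forall x y, x - y \in A} -> {in B &, forall x y, x - y \in B} ->
  (#|A| * #|B| <= #|V| * #|A :&: B|)%N.
Proof.
move=> subA subB.
rewrite -cardsX -sum1_card (partition_big (fun u : V * V => u.1 + u.2) predT) //=.
rewrite -sum_nat_const; apply: leq_sum => w _; rewrite sum1dep_card.
set Bw := [set _ | _]; have [->|[u0 u0Bw]] := set_0Vmem Bw; first by rewrite cards0.
move: u0Bw; rewrite !inE => /andP[/andP[u01A u02B] /eqP u0w].
pose f (u : V * V) := u.1 - u0.1.
rewrite -(card_in_imset (f := f)); last first.
  move=> [u1 u2] [v1 v2]; rewrite !inE /f /= => /andP[_ /eqP uw] /andP[_ /eqP vw].
  by move=> /subIr Eu1; move: vw; rewrite -Eu1 -uw => /addrI->.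
apply/subset_leq_card/subsetP => z /imsetP[u]; rewrite !inE.
move=> /andP[/andP[u1A u2B] /eqP uw] ->; rewrite subA //=.
have -> : f u = u0.2 - u.2.
  rewrite /f (canRL (addrK u.2) uw) (canRL (addrK u0.2) u0w).
  by rewrite opprB addrC addrA subrK.
exact: subB.
Qed.

Lemma in_Fq_pow (F : finFieldType) (n k : nat) (x : F) :
  in_Fq n x -> in_Fq (n ^ k) x.
Proof.
by rewrite /in_Fq => /eqP xn; elim: k => [|k /eqP IHk]; rewrite ?expnSr ?exprM ?IHk ?xn.
Qed.

Lemma in_FqM (F : finFieldType) n (x y : F) :
  in_Fq n x -> in_Fq n y -> in_Fq n (x * y).
Proof. by rewrite /in_Fq exprMn => /eqP-> /eqP->. Qed.

Lemma in_FqV (F : finFieldType) n (x : F) : in_Fq n x -> in_Fq n x^-1.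
Proof. by rewrite /in_Fq exprVn => /eqP->. Qed.

Lemma in_Fq1 (F : finFieldType) n : in_Fq n (1 : F).
Proof. by rewrite /in_Fq expr1n. Qed.

Section FrobeniusFixed.
Variables (F : finFieldType) (n : nat).
Hypothesis n_pchar : [pchar F].-nat n.

Lemma in_FqD (x y : F) : in_Fq n x -> in_Fq n y -> in_Fq n (x + y).
Proof. by rewrite /in_Fq exprDn_pchar // => /eqP-> /eqP->. Qed.

Lemma in_FqN (x : F) : in_Fq n x -> in_Fq n (- x).
Proof. by rewrite /in_Fq exprNn_pchar // => /eqP->. Qed.

Lemma in_FqB (x y : F) : in_Fq n x -> in_Fq n y -> in_Fq n (x - y).
Proof. by move=> nx ny; rewrite in_FqD ?in_FqN. Qed.

Lemma affine_in_Fq_inj (y a b c : F) : ~~ in_Fq n y ->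
  in_Fq n a -> in_Fq n b -> in_Fq n c -> a + y = c * (b + y) -> a = b.
Proof.
move=> yNFq aFq bFq cFq E; have [c1|c_neq1] := eqVneq c 1.
  by move: E; rewrite c1 mul1r => /addIr.
have c1_neq0 : 1 - c != 0 by rewrite subr_eq0 eq_sym.
have Ey : y = (c * b - a) / (1 - c).
  by apply: (mulIf c1_neq0); rewrite divfK // -[a](addrK y) E; ring.
move: yNFq; rewrite Ey in_FqM ?in_FqV ?in_FqB ?in_FqM ?in_Fq1 //.
Qed.

End FrobeniusFixed.

Section PrimitiveElement.
Variables (F : finFieldType) (alpha : F).
Hypothesis prim : #|F|.-1.-primitive_root alpha.

Lemma prim_neq0 : alpha != 0.
Proof. by rewrite (prim_root_eq0 prim) -lt0n (prim_order_gt0 prim). Qed.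

Lemma expf_card_pred (x : F) : x != 0 -> x ^+ #|F|.-1 = 1.
Proof.
move=> x_neq0; apply: (mulIf x_neq0); rewrite mul1r -exprSr.
by rewrite prednK ?expf_card // (ltn_trans _ (finNzRing_gt1 F)).
Qed.

(* dlog 0 = 0 is a junk value. *)
Definition dlog (x : F) : nat :=
  if [pick i : 'I_#|F|.-1 | alpha ^+ i == x] is Some i then val i else 0.

Lemma dlog_lt (x : F) : (dlog x < #|F|.-1)%N.
Proof. by rewrite /dlog; case: pickP => [i _|_]; rewrite ?ltn_ord ?(prim_order_gt0 prim). Qed.

Lemma dlogK (x : F) : x != 0 -> alpha ^+ dlog x = x.
Proof.
move=> x_neq0; have [i ->] := prim_rootP prim (expf_card_pred x_neq0).
by rewrite /dlog; case: pickP => [j /eqP //|/(_ i)]; rewrite eqxx.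
Qed.

Lemma in_Fq_expr (n a e : nat) : (1 < n)%N -> (a * n.-1 = #|F|.-1)%N ->
  in_Fq n (alpha ^+ e) = (a %| e)%N.
Proof.
move=> n_gt1 Ean; rewrite /in_Fq -exprM (eq_prim_root_expr prim).
rewrite eqn_mod_dvd ?leq_pmulr 1?ltnW // -{2}[e]muln1 -mulnBr subn1 -Ean.
by rewrite dvdn_pmul2r // -subn1 subn_gt0.
Qed.

Lemma card_in_Fq_ge (n a : nat) : (0 < n)%N -> (a * n.-1 = #|F|.-1)%N ->
  (n <= #|[set y : F | in_Fq n y]|)%N.
Proof.
move=> n_gt0 Ean.
have a_gt0 : (0 < a)%N.
  by move: (prim_order_gt0 prim); rewrite -Ean muln_gt0 => /andP[].
have lt_card (s : 'I_n.-1) : (a * s < #|F|.-1)%N by rewrite -Ean ltn_pmul2l.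
pose f (o : option 'I_n.-1) := if o is Some s then alpha ^+ (a * s) else 0.
have f_inj : injective f.
  have alpha_neq0 e : alpha ^+ e != 0 by rewrite expf_neq0 ?prim_neq0.
  move=> [s|] [s'|] //= E.
  - move: E => /eqP; rewrite (eq_prim_root_expr prim) !modn_small //.
    by rewrite eqn_pmul2l // => /eqP/val_inj->.
  - by move: (alpha_neq0 (a * s)%N); rewrite E eqxx.
  - by move: (alpha_neq0 (a * s')%N); rewrite E eqxx.
apply: (@leq_trans #|[set: option 'I_n.-1]|).
  by rewrite cardsT card_option card_ord prednK.
rewrite -(card_imset _ f_inj).
apply/subset_leq_card/subsetP => _ /imsetP[[s|] _ ->]; rewrite inE /=.
  rewrite (@in_Fq_expr n a) ?dvdn_mulr //.
  by case: n {n_gt0 Ean lt_card f f_inj} s => [|[|n]] [].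
by rewrite /in_Fq expr0n; case: n n_gt0 {Ean lt_card f f_inj}.
Qed.

End PrimitiveElement.

Section BaerSubplanes.
Variables (p k r : nat) (F : finFieldType) (alpha : F) (L : {set F}).
Hypotheses (p_pr : prime p) (k_gt0 : (0 < k)%N) (r_def : r = (p ^ k)%N).
Local Notation q := (r ^ 2)%N.
Local Notation N := (q ^ 2 + q + 1)%N.
Local Notation m := (q - r + 1)%N.
Hypotheses (cardF : #|F| = (q ^ 3)%N) (prim : (q ^ 3 - 1).-primitive_root alpha).
Hypothesis L_plane : is_Fq_plane q L.
Local Notation S := (line_pts q alpha L).

Lemma r_gt1 : (1 < r)%N.
Proof. by rewrite r_def -{1}(expn0 p) ltn_exp2l ?prime_gt1. Qed.

Lemma card_pred_factor : #|F|.-1 = (N * (q - 1))%N.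
Proof. by rewrite cardF; have := r_gt1; nia. Qed.

Let prim_F : #|F|.-1.-primitive_root alpha.
Proof. by rewrite cardF -subn1. Qed.

Lemma N_factor : N = ((q + r + 1) * m)%N.
Proof. by have := r_gt1; nia. Qed.

Lemma N_gt0 : (0 < N)%N. Proof. by rewrite addn1. Qed.
Lemma m_gt0 : (0 < m)%N. Proof. by rewrite addn1. Qed.
Lemma m_dvd_N : (m %| N)%N. Proof. by rewrite N_factor dvdn_mull. Qed.

Lemma pchar_r : [pchar F].-nat r.
Proof.
have pF : p \in [pchar F].
  by apply: (card_finPcharP (n := (k * 6)%N)); rewrite // cardF r_def -!expnM.
by rewrite (eq_pnat _ (pcharf_eq pF)) r_def pnatX pnat_id.
Qed.

Lemma pchar_q : [pchar F].-nat q. Proof. by rewrite pnatX pchar_r. Qed.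

Lemma in_Fq_exprN e : in_Fq q (alpha ^+ e) = (N %| e)%N.
Proof.
by apply: (in_Fq_expr prim_F); rewrite ?card_pred_factor ?subn1 //; have := r_gt1; nia.
Qed.

Lemma in_Fq_expr_cube e : in_Fq (r ^ 3) (alpha ^+ e) = (r ^ 3 + 1 %| e)%N.
Proof.
apply: (in_Fq_expr prim_F); rewrite ?card_pred_factor -?subn1; have := r_gt1; nia.
Qed.

Lemma m_dvd_dlog y : in_Fq (r ^ 3) y -> y != 0 -> (m %| dlog alpha y)%N.
Proof.
move=> yF y_neq0; rewrite -(dlogK prim_F y_neq0) in_Fq_expr_cube in yF.
by apply: dvdn_trans yF; apply/dvdnP; exists (r + 1)%N; have := r_gt1; nia.
Qed.

Lemma card_in_Fq_root : (r <= #|[set y : F | in_Fq r y]|)%N.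
Proof.
apply: (card_in_Fq_ge prim_F (a := (r ^ 5 + r ^ 4 + r ^ 3 + r ^ 2 + r + 1)%N)).
  exact: ltnW r_gt1.
by rewrite card_pred_factor -subn1; have := r_gt1; nia.
Qed.

Lemma card_in_Fq_cube : (r ^ 3 <= #|[set y : F | in_Fq (r ^ 3) y]|)%N.
Proof.
apply: (card_in_Fq_ge prim_F (a := (r ^ 3 + 1)%N)); first by rewrite expn_gt0 ltnW ?r_gt1.
by rewrite card_pred_factor -subn1; have := r_gt1; nia.
Qed.

Lemma mem_line0 : 0 \in L. Proof. by case: L_plane. Qed.

Lemma mem_lineD x y : x \in L -> y \in L -> x + y \in L.
Proof. by case: L_plane => _ + _ _; apply. Qed.

Lemma mem_lineZ c x : in_Fq q c -> x \in L -> c * x \in L.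
Proof. by case: L_plane => _ _ + _; apply. Qed.

Lemma mem_lineB x y : x \in L -> y \in L -> x - y \in L.
Proof.
move=> xL yL; rewrite mem_lineD // -mulN1r mem_lineZ //.
by rewrite in_FqN ?in_Fq1 ?pchar_q.
Qed.

Lemma card_line : #|L| = (q ^ 2)%N. Proof. by case: L_plane. Qed.

Lemma alpha_expr_neq0 e : alpha ^+ e != 0.
Proof. by rewrite expf_neq0 // (prim_neq0 prim_F). Qed.

Lemma same_pointP e1 e2 :
  reflect (exists2 c, in_Fq q c & alpha ^+ e1 = c * alpha ^+ e2) (e1 == e2 %[mod N]).
Proof.
have N_dvd_card : (N %| #|F|.-1)%N by rewrite card_pred_factor dvdn_mulr.
apply: (iffP idP) => [/eqP E | [c cFq E]].
  exists (alpha ^+ (e1 + e2 * #|F|.-2)).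
    rewrite in_Fq_exprN /dvdn -modnDml E modnDml -mulnS.
    by rewrite prednK ?(prim_order_gt0 prim_F) // -modnMmr (eqP N_dvd_card) muln0 mod0n.
  rewrite -exprD; apply/eqP; rewrite (eq_prim_root_expr prim_F) -addnA.
  rewrite [(e2 * _ + e2)%N]addnC -mulnS.
  by rewrite prednK ?(prim_order_gt0 prim_F) // addnC modnMDl.
have c_neq0 : c != 0.
  by apply: contraNneq (alpha_expr_neq0 e1); rewrite E => ->; rewrite mul0r.
move: cFq E; rewrite -(dlogK prim_F c_neq0) in_Fq_exprN => /dvdnP[j ->].
move/eqP; rewrite -exprD (eq_prim_root_expr prim_F) => /eqP E.
by rewrite -(modn_dvdm _ N_dvd_card) E modn_dvdm // modnMDl.
Qed.

Lemma mem_line_modN e1 e2 : e1 = e2 %[mod N] ->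
  (alpha ^+ e1 \in L) = (alpha ^+ e2 \in L).
Proof.
have imp i j : i = j %[mod N] -> alpha ^+ j \in L -> alpha ^+ i \in L.
  by move=> /eqP/same_pointP[c cFq ->]; apply: mem_lineZ.
by move=> E; apply/idP/idP; apply: imp.
Qed.

Definition point (e : nat) : 'I_N := Ordinal (ltn_pmod e N_gt0).

Lemma point_mem_line e : (point e \in S) = (alpha ^+ e \in L).
Proof. by rewrite inE /= (mem_line_modN (modn_mod e N)). Qed.

Lemma point_modm e : (point e %% m = e %% m)%N.
Proof. exact: modn_dvdm m_dvd_N. Qed.

Lemma card_line_pts : #|S| = (q + 1)%N.
Proof.
have q1_gt0 : (0 < q - 1)%N by have := r_gt1; nia.
have lt_card (i : 'I_N) (j : 'I_(q - 1)) : (i + N * j < #|F|.-1)%N.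
  by rewrite card_pred_factor; have := ltn_ord i; have := ltn_ord j; nia.
pose g (u : 'I_N * 'I_(q - 1)) := alpha ^+ (u.1 + N * u.2).
have g_inj : injective g.
  move=> [i j] [i' j'] /eqP; rewrite /g (eq_prim_root_expr prim_F).
  rewrite !modn_small ?lt_card //= => /eqP E.
  have Ei : i = i' :> nat.
    move: (congr1 (modn^~ N) E) => /=.
    by rewrite ![(N * _)%N]mulnC ![(_ + _ * N)%N]addnC !modnMDl !modn_small.
  move: E; rewrite Ei => /addnI/eqP; rewrite eqn_pmul2l ?N_gt0 // => /eqP Ej.
  by congr pair; apply: val_inj.
have img : g @: setX S setT = L :\ 0.
  apply/setP => x; rewrite !inE; apply/imsetP/andP => [[[i j]] | [x_neq0 xL]].
    rewrite !inE andbT => iS ->; split; first exact: alpha_expr_neq0.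
    rewrite /g /= (mem_line_modN (e2 := i)) //.
    by rewrite mulnC addnC modnMDl.
  have lt_q1 : (dlog alpha x %/ N < q - 1)%N.
    by rewrite ltn_divLR ?N_gt0 // mulnC -card_pred_factor dlog_lt.
  exists (point (dlog alpha x), Ordinal lt_q1).
    by rewrite in_setX in_setT andbT point_mem_line dlogK.
  by rewrite /g /= mulnC addnC -divn_eq dlogK.
have := card_imset (setX S setT) g_inj; rewrite img cardsX cardsT card_ord.
have := cardsD1 0 L; rewrite mem_line0 card_line => cardL E.
apply/eqP; rewrite -(eqn_pmul2r q1_gt0) -E; apply/eqP; move: cardL q1_gt0 => /=.
by rewrite -mulnn; move: (r ^ 2)%N #|L :\ 0| => n x; nia.
Qed.

Definition baer_pts (c : nat) : {set 'I_N} := [set i in S | (i %% m == c)%N].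

Lemma baer_pts_gt0 c : (c < m)%N -> (0 < #|baer_pts c|)%N.
Proof.
move=> c_lt_m.
pose T := [set y : F | in_Fq (r ^ 3) y].
pose M := (fun y => alpha ^+ c * y) @^-1: L.
have subT : {in T &, forall x y, x - y \in T}.
  by move=> x y; rewrite !inE; apply: in_FqB; rewrite pnatX pchar_r.
have subM : {in M &, forall x y, x - y \in M}.
  by move=> x y; rewrite !inE mulrBr; apply: mem_lineB.
(* F_{r^3} (dimension 3 over F_r) and the plane M (dimension 4 over F_r) meet
   in an F_r-subspace, hence in at least r elements. *)
have r_le_TM : (r <= #|T :&: M|)%N.
  have r6_gt0 : (0 < r ^ 6)%N by rewrite expn_gt0 ltnW ?r_gt1.
  have := leq_cardM_cardI subT subM.
  rewrite cardF card_preimset ?card_line -?expnM; last exact/mulfI/alpha_expr_neq0.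
  move=> le_TM; rewrite -(leq_pmul2l r6_gt0); apply: leq_trans le_TM.
  by rewrite -expnSr (_ : 7 = 3 + 2 * 2)%N // expnD leq_mul2r card_in_Fq_cube orbT.
have [y /setD1P[y_neq0 /setIP[yT yM]]] : exists y, y \in (T :&: M) :\ 0.
  apply/card_gt0P; rewrite (cardsD1 0) in r_le_TM.
  by move: r_le_TM r_gt1; case: (0 \in _); move: #|_ :\ 0| => n; lia.
apply/card_gt0P; exists (point (c + dlog alpha y)).
rewrite /T /M !inE in yT yM; rewrite inE point_mem_line exprD dlogK // yM /= point_modm.
case/dvdnP: (m_dvd_dlog yT y_neq0) => j ->.
by rewrite addnC modnMDl modn_small.
Qed.

Lemma gcdn_cube_N : gcdn (r ^ 3 + 1) N = m.
Proof.
have -> : (r ^ 3 + 1 = (r + 1) * m)%N by have := r_gt1; nia.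
rewrite N_factor -muln_gcdl (_ : q + r + 1 = r * (r + 1) + 1)%N; last by nia.
by rewrite gcdnMDl gcdn1 mul1n.
Qed.

Lemma exists_baer_chord c i1 i2 : i1 \in baer_pts c -> i2 \in baer_pts c -> i1 != i2 ->
  exists y, [/\ in_Fq (r ^ 3) y, ~~ in_Fq q y & alpha ^+ i1 * y \in L].
Proof.
rewrite !inE => /andP[_ /eqP i1c] /andP[i2S /eqP i2c] i12.
(* y = alpha^((r^3 + 1) x) with (r^3 + 1) x = i2 - i1 (mod N), solvable since
   gcd(r^3 + 1, N) = m divides i2 - i1. *)
set d := (i2 + (N - i1))%N.
have i1d : (i1 + d = i2 + N)%N by rewrite /d addnCA subnKC // ltnW.
have gcd_dvd_d : (gcdn (r ^ 3 + 1) N %| d)%N.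
  rewrite gcdn_cube_N /dvdn; have : (i1 + d == i1 + 0 %[mod m])%N.
    by rewrite i1d -modnDmr (eqP m_dvd_N) !addn0 i1c i2c.
  by rewrite eqn_modDl mod0n.
have r31_gt0 : (0 < r ^ 3 + 1)%N by rewrite addn1.
have [x Ex] := exists_mul_eq_mod r31_gt0 gcd_dvd_d.
have i1x : (i1 + (r ^ 3 + 1) * x = i2 %[mod N])%N.
  by rewrite -modnDmr Ex modnDmr i1d modnDr.
exists (alpha ^+ ((r ^ 3 + 1) * x)); split.
- by rewrite in_Fq_expr_cube dvdn_mulr.
- rewrite in_Fq_exprN; apply: contra i12 => /eqP N_dvd.
  apply/eqP/val_inj => /=; rewrite -(modn_small (ltn_ord i1)) -(modn_small (ltn_ord i2)).
  by rewrite -i1x -modnDmr N_dvd addn0.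
- by rewrite -exprD (mem_line_modN i1x).
Qed.

Lemma baer_pts_chord_ge c i y : i \in baer_pts c ->
  in_Fq (r ^ 3) y -> ~~ in_Fq q y -> alpha ^+ i * y \in L ->
  (r + 1 <= #|baer_pts c|)%N.
Proof.
move=> ic yF yNFq xyL; move: (ic); rewrite !inE => /andP[xL /eqP ic_eq].
pose Fr := [set l : F | in_Fq r l].
have lFq l : l \in Fr -> in_Fq q l by rewrite inE => /in_Fq_pow.
have ly_neq0 l : l \in Fr -> l + y != 0.
  move=> lFr; apply: contraNneq yNFq => ly0.
  by rewrite -(addKr l y) ly0 addr0 in_FqN ?pchar_q ?lFq.
(* The points alpha^i (l + y), l in F_r, of the line through alpha^i and
   alpha^i y are r distinct points of the same subplane, all different from P_i. *)
pose pt l := point (i + dlog alpha (l + y)).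
have pt_expr l : l \in Fr -> alpha ^+ (i + dlog alpha (l + y)) = alpha ^+ i * (l + y).
  by move=> lFr; rewrite exprD dlogK ?ly_neq0.
have pt_baer l : l \in Fr -> pt l \in baer_pts c.
  move=> lFr; rewrite inE point_mem_line pt_expr // mulrDr.
  rewrite mem_lineD ?xyL 1?mulrC ?mem_lineZ ?lFq //= point_modm -ic_eq.
  have lyF : in_Fq (r ^ 3) (l + y).
    by rewrite in_FqD ?yF ?pnatX ?pchar_r //; move: lFr; rewrite inE => /in_Fq_pow.
  by case/dvdnP: (m_dvd_dlog lyF (ly_neq0 l lFr)) => j ->; rewrite addnC modnMDl.
have pt_neq l : l \in Fr -> pt l != i.
  move=> lFr; apply: contra yNFq => /eqP/(congr1 val) /= E.
  have /same_pointP[c0 c0Fq] : (i + dlog alpha (l + y)%R == i %[mod N])%N.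
    by rewrite E modn_small.
  rewrite pt_expr // mulrC => /(mulIf (alpha_expr_neq0 i)) lyc0.
  by rewrite -(addKr l y) lyc0 in_FqD ?in_FqN ?pchar_q ?c0Fq ?lFq.
have pt_inj : {in Fr &, injective pt}.
  move=> l l' lFr l'Fr /(congr1 val) /= /eqP/same_pointP[c0 c0Fq].
  rewrite !pt_expr // mulrCA => /(mulfI (alpha_expr_neq0 i)).
  exact (affine_in_Fq_inj pchar_q yNFq (lFq _ lFr) (lFq _ l'Fr) c0Fq).
have sub : i |: (pt @: Fr) \subset baer_pts c.
  by apply/subsetP => j /setU1P[-> // | /imsetP[l lFr ->]]; apply: pt_baer.
apply: leq_trans (subset_leq_card sub).
have i_notin : i \notin pt @: Fr.
  by apply/imsetP => -[l lFr Ei]; move: (pt_neq l lFr); rewrite -Ei eqxx.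
by rewrite cardsU1 i_notin card_in_imset // add1n addn1 ltnS card_in_Fq_root.
Qed.

Lemma baer_pts_big c : (1 < #|baer_pts c|)%N -> (r + 1 <= #|baer_pts c|)%N.
Proof.
case/card_gt1P => i1 [i2 [i1c i2c i12]].
have [y [yF yNFq xyL]] := exists_baer_chord i1c i2c i12.
exact: baer_pts_chord_ge i1c yF yNFq xyL.
Qed.

Lemma coprime_p_N : coprime p N.
Proof.
rewrite prime_coprime //; apply/negP => p_dvd_N.
have p_dvd_r : (p %| r)%N by rewrite r_def dvdn_exp ?dvdnn.
move: p_dvd_N; rewrite dvdn_addr ?dvdn_add ?dvdn_exp //.
by rewrite dvdn1 (gtn_eqF (prime_gt1 p_pr)).
Qed.

Lemma baer_pts_tau c : tau_fixed p S ->
  (#|baer_pts c| <= #|baer_pts (c * p %% m)|)%N.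
Proof.
move=> tauS; pose tau (i : 'I_N) := point (i * p).
have tau_inj : injective tau.
  have [u v Euv _] := egcdnP N (prime_gt0 p_pr).
  have tauK x : (x * p %% N * u = x %[mod N])%N.
    rewrite modnMml -mulnA [(p * u)%N]mulnC Euv (eqP coprime_p_N).
    by rewrite mulnDr mulnA muln1 modnMDl.
  move=> i j /(congr1 val) /= E; apply: val_inj => /=.
  by rewrite -(modn_small (ltn_ord i)) -(modn_small (ltn_ord j)) -(tauK i) E tauK.
have tauS_sub i : i \in S -> tau i \in S.
  by move=> iS; rewrite -tauS inE; apply/existsP; exists i; rewrite iS eqxx.
rewrite -(card_imset (baer_pts c) tau_inj).
apply/subset_leq_card/subsetP => j /imsetP[i]; rewrite inE => /andP[iS /eqP ic] ->.
by rewrite inE tauS_sub //= point_modm -modnMml ic.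
Qed.

Lemma baer_shift_eq0 c : (c < m)%N -> (c * p = c %[mod m])%N -> c = 0%N.
Proof.
move=> c_lt_m /eqP E.
have : (m %| c * (p - 1))%N.
  by rewrite mulnBr muln1 -eqn_mod_dvd ?E // leq_pmulr // prime_gt0.
rewrite Gauss_dvdl; last by rewrite subn1 coprime_sqr_sub_add1 // r_def dvdn_pred_predX.
by rewrite /dvdn modn_small // => /eqP.
Qed.

Lemma sum_card_baer_pts : (\sum_(c < m) #|baer_pts c| = q + 1)%N.
Proof.
rewrite -card_line_pts -sum1_card.
rewrite (partition_big (fun i : 'I_N => Ordinal (ltn_pmod i m_gt0)) predT) //=.
by apply: eq_bigr => c _; rewrite sum1dep_card; apply: eq_card => i; rewrite !inE.
Qed.

Lemma sum_card_baer_pts_pred : (\sum_(c < m) (#|baer_pts c| - 1) = r)%N.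
Proof.
have : (\sum_(c < m) (#|baer_pts c| - 1) + \sum_(c < m) 1 = q + 1)%N.
  rewrite -big_split -sum_card_baer_pts; apply: eq_bigr => c _.
  by rewrite /= subnK ?baer_pts_gt0.
rewrite sum_nat_const card_ord muln1; move: (\sum_(c < m) _)%N => n.
by have := r_gt1; nia.
Qed.

Lemma baer_pts_gt1_eq0 c : tau_fixed p S -> (c < m)%N ->
  (1 < #|baer_pts c|)%N -> c = 0%N.
Proof.
move=> tauS c_lt_m c_gt1; apply: baer_shift_eq0 => //; apply/eqP.
rewrite (modn_small c_lt_m); set c' := (c * p %% m)%N.
have c'_lt_m : (c' < m)%N by rewrite ltn_mod m_gt0.
have big_c := baer_pts_big c_gt1.
have big_c' := leq_trans big_c (baer_pts_tau c tauS).
apply: contraT => c'_neq_c.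
have := leq_add_sum (fun d : 'I_m => #|baer_pts d| - 1)%N
  (i := Ordinal c_lt_m) (j := Ordinal c'_lt_m).
rewrite sum_card_baer_pts_pred /= eq_sym c'_neq_c => /(_ isT).
by move: big_c big_c' r_gt1; move: #|baer_pts c| #|baer_pts c'| => x y; lia.
Qed.

Lemma card_baer_pts c : tau_fixed p S -> (c < m)%N ->
  #|baer_pts c| = (if c == 0 then r + 1 else 1)%N.
Proof.
move=> tauS c_lt_m.
have card1 d : (d < m)%N -> d != 0%N -> #|baer_pts d| = 1%N.
  move=> d_lt_m d_neq0; apply/eqP; rewrite eqn_leq baer_pts_gt0 // andbT leqNgt.
  by apply: contra d_neq0 => /(baer_pts_gt1_eq0 tauS d_lt_m) ->.
case: eqP => [c0 | /eqP]; last exact: card1.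
have := sum_card_baer_pts_pred; rewrite (bigD1 (Ordinal m_gt0)) //= big1.
  by rewrite c0 addn0; have := baer_pts_gt0 m_gt0; move: #|_| => x; lia.
by move=> d d_neq0; rewrite card1 ?ltn_ord.
Qed.

Lemma wcount_baer_pts t u : (t %| m)%N ->
  wcount t S u = (\sum_(c < m | c %% t == u) #|baer_pts c|)%N.
Proof.
move=> t_dvd_m; rewrite /wcount -sum1_card.
rewrite (partition_big (fun i : 'I_N => Ordinal (ltn_pmod i m_gt0))
  (fun c : 'I_m => (c %% t == u)%N)) /=; last first.
  by move=> i; rewrite inE => /andP[_]; rewrite modn_dvdm.
apply: eq_bigr => c cu; rewrite sum1dep_card; apply: eq_card => i; rewrite !inE -val_eqE /=.
apply/idP/idP => [/andP[/andP[-> _] ->] // | /andP[iS /eqP ic]].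
by rewrite iS ic eqxx andbT /= -(modn_dvdm i t_dvd_m) ic.
Qed.

Lemma baer_line_counts v : (1 <= v)%N -> (v * (q + r + 1) %| N)%N -> tau_fixed p S ->
  let t := (N %/ (v * (q + r + 1)))%N in
  [/\ (t * v = q - r + 1)%N, wcount t S 0 = (r + v)%N
    & forall u : nat, (0 < u < t)%N -> wcount t S u = v].
Proof.
move=> v_gt0 vX_dvd_N tauS t.
have X_gt0 : (0 < q + r + 1)%N by rewrite addn1.
have v_dvd_m : (v %| m)%N by move: vX_dvd_N; rewrite N_factor mulnC dvdn_pmul2l.
have tv : (t * v = m)%N by rewrite /t N_factor [(v * _)%N]mulnC divnMl // divnK.
have t_dvd_m : (t %| m)%N by rewrite -tv dvdn_mulr.
have wcount_u u : (u < t)%N -> wcount t S u = (v + (u == 0) * r)%N.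
  move=> u_lt_t; rewrite wcount_baer_pts //.
  rewrite (eq_bigr (fun c : 'I_m => (c == 0 :> nat) * r + 1)%N); last first.
    by move=> c _; rewrite card_baer_pts ?ltn_ord //; case: eqP; rewrite ?mul1n.
  rewrite big_split /= sum1dep_card (card_ord_modn_eq (esym tv) u_lt_t) addnC.
  congr (_ + _)%N; rewrite big_mkcond (bigD1 (Ordinal m_gt0)) //= big1 ?addn0.
    by rewrite mod0n eq_sym; case: eqP.
  by move=> c c_neq0; rewrite (negbTE (c_neq0 : (c : nat) != 0%N)) mul0n if_same.
have t_gt0 : (0 < t)%N by move: m_gt0; rewrite -tv muln_gt0 => /andP[].
split => //; first by rewrite wcount_u // mul1n addnC.
by move=> u /andP[u_gt0 u_lt_t]; rewrite wcount_u // eqn0Ngt u_gt0 addn0.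
Qed.

End BaerSubplanes.

Theorem proposition7 (p h q r v : nat) (F : finFieldType) (alpha : F)
    (L : {set F}) :
  prime p -> (0 < h)%N -> q = (p ^ h)%N ->
  #|F| = (q ^ 3)%N ->
  (q ^ 3 - 1).-primitive_root alpha ->
  is_Fq_plane q L ->
  tau_fixed p (line_pts q alpha L) ->
  q = (r ^ 2)%N ->
  (1 <= v)%N ->
  (v * (q + r + 1) %| q ^ 2 + q + 1)%N ->
  let t := ((q ^ 2 + q + 1) %/ (v * (q + r + 1)))%N in
  [/\ (t * v = q - r + 1)%N,
      wcount t (line_pts q alpha L) 0 = (r + v)%N
    & forall u : nat, (0 < u < t)%N -> wcount t (line_pts q alpha L) u = v].
Proof.
move=> p_pr h_gt0 qE cardF prim L_plane tauS qr v_gt0 dvd_N.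
rewrite qr in qE cardF prim L_plane tauS dvd_N *; subst q.
have [k _ r_def] : exists2 k, (k <= h)%N & r = (p ^ k)%N.
  by apply/(dvdn_pfactor _ _ p_pr); rewrite -qE dvdn_mull.
have k_gt0 : (0 < k)%N.
  rewrite lt0n; apply/eqP => k0; move/eqP: qE; rewrite r_def k0 exp1n eq_sym.
  by rewrite -[1%N](expn0 p) eqn_exp2l ?prime_gt1 // eqn0Ngt h_gt0.
exact: baer_line_counts p_pr k_gt0 r_def cardF prim L_plane v v_gt0 dvd_N tauS.
Qed.
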